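(* Let $q$ be a prime power, $m\ge2$, and $\Phi(x)=\sum_{i=0}^{2m}c_ix^{q^i}\in\mathbb{F}_q[x]$ with $c_{2m}=1$, $c_i=-c_{2m-i}$ for $0\le i\le m$, and $c_m=0$. Then there is a monic polynomial $f\in\mathbb{F}_q[x]$ of degree $q^{m-1}(q^m+1)$ such that $f^q-f=x^{q^m}\Phi(x)$. This $f$ is unique if we require $f(0)=0$. The powers of $x$ occurring in $f$ with nonzero coefficient all have the form $x^{q^i+q^j}$ for non-negative integers $i,j$. *)

From HB Require Import structures.
From mathcomp Require Import all_boot all_order all_algebra all_field.
Set Implicit Arguments. Unset Strict Implicit. Unset Printing Implicit Defensive.
Import GRing.Theory.
Local Open Scope ring_scope.

Definition linPhi (F : finFieldType) (m : nat) (c : nat -> F) : {poly F} :=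
  \sum_(i < (2 * m).+1) c i *: 'X^(#|F| ^ i).

From HB Require Import structures.
From mathcomp Require Import all_boot all_order all_algebra all_fingroup all_solvable all_field.
From mathcomp Require Import zify ring.
Import GRing.Theory.
Local Open Scope ring_scope.

(* The map f |-> f^q is F-linear on F[x] and sends the monomial x^(q^a + q^b)
   to x^(q^(a+1) + q^(b+1)).  Hence the chain
   chain_i = sum_(t < m-i) x^(q^(i+t) + q^(m+t)) telescopes under f |-> f^q - f
   to x^(q^m + q^(2m-i)) - x^(q^i + q^m), and by the antisymmetry
   c_i = -c_(2m-i) the combination f = sum_(i < m) c_(2m-i) chain_i satisfies
   f^q - f = x^(q^m) Phi.  Its leading monomial is the last one of chain_0, of
   degree q^(m-1) + q^(2m-1).  If g is another solution, h = g - f satisfies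
   h^q = h, so h is constant, and h(0) = 0. *)

Lemma monicDl (R : nzSemiRingType) (p r : {poly R}) :
  (size r < size p)%N -> p \is monic -> p + r \is monic.
Proof. by move=> lt_rp /monicP lead_p; rewrite monicE lead_coefDl ?lead_p. Qed.

Lemma sum_Xn_increasing (R : nzSemiRingType) (e : nat -> nat) (n : nat) :
  {homo e : a b / (a < b)%N} ->
  let p := \sum_(t < n.+1) 'X^(e t) : {poly R} in
  p \is monic /\ size p = (e n).+1.
Proof.
move=> e_incr p.
have lt_rest : (size (\sum_(t < n) 'X^(e t) : {poly R})%R
                < size ('X^(e n) : {poly R})%R)%N.
  rewrite size_polyXn ltnS; apply: leq_trans (size_sum _ _ _) _.
  by apply/bigmax_leqP => t _; rewrite size_polyXn e_incr.
rewrite /p big_ord_recr /= addrC.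
by rewrite monicDl ?monicXn // size_polyDl // size_polyXn.
Qed.

Lemma size_poly_le1_of_expr_id {R : idomainType} {p : {poly R}} {n : nat} :
  (1 < n)%N -> p ^+ n = p -> (size p <= 1)%N.
Proof. by move=> n_gt1 pn; have := size_exp p n; rewrite pn; nia. Qed.

Section PolySupport.
Context {R : nzRingType} {P : nat -> Prop}.

Definition supported_in (p : {poly R}) := forall k, p`_k != 0 -> P k.

Lemma supported_in_Xn k : P k -> supported_in 'X^k.
Proof.
by move=> Pk j; rewrite coefXn; case: (eqVneq j k) => [->|_] //; rewrite eqxx.
Qed.

Lemma supported_in_scale a p : supported_in p -> supported_in (a *: p).
Proof.
by move=> sp k; rewrite coefZ; case: (eqVneq p`_k 0) => [->|/sp //]; rewrite mulr0 eqxx.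
Qed.

Lemma supported_in_sum (I : Type) (r : seq I) (Q : pred I) (G : I -> {poly R}) :
  (forall i, Q i -> supported_in (G i)) -> supported_in (\sum_(i <- r | Q i) G i).
Proof.
move=> sG; apply: (big_ind supported_in) => //; first by move=> k; rewrite coef0 eqxx.
move=> p1 p2 sp1 sp2 k; rewrite coefD.
by case: (eqVneq p1`_k 0) => [->|/sp1 //]; rewrite add0r => /sp2.
Qed.

Lemma supported_in_coef {p k} : supported_in p -> ~ P k -> p`_k = 0.
Proof. by move=> sp nPk; case: (eqVneq p`_k 0) => // /sp. Qed.

End PolySupport.

Arguments supported_in {R} P p.

Lemma sumr_fold_middle {V : nmodType} (m : nat) (G : nat -> V) : G m = 0 ->
  \sum_(i < (2 * m).+1) G i = \sum_(i < m) (G i + G (2 * m - i)%N).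
Proof.
move=> Gm; rewrite big_split /= -!(big_mkord xpredT G).
rewrite -(big_mkord xpredT (fun i => G (2 * m - i)%N)).
rewrite (@big_cat_nat _ _ _ m) //=; last by lia.
rewrite (@big_ltn _ _ _ m) ?ltnS ?leq_pmull // Gm add0r; congr (_ + _).
rewrite [RHS]big_nat_rev /= add0n -{1}(add0n m.+1) big_addn.
have -> : ((2 * m).+1 - m.+1 = m)%N by lia.
by apply: eq_big_nat => i /andP[_ lt_im]; congr G; lia.
Qed.

Section FiniteFieldFrobenius.
Variable F : finFieldType.
Local Notation q := #|F|.

Lemma pchar_poly_nat_card : [pchar {poly F}].-nat q.
Proof.
have [p _ pcharFp] := finPcharP F.
have := abelem_pgroup (fin_ring_pchar_abelem pcharFp).
rewrite /pgroup cardsT => p_nat_q.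
by rewrite (eq_pnat _ (@pchar_poly F)) (eq_pnat _ (pcharf_eq pcharFp)).
Qed.

Lemma exprD_card (a b : {poly F}) : (a + b) ^+ q = a ^+ q + b ^+ q.
Proof. exact: exprDn_pchar pchar_poly_nat_card. Qed.

Lemma exprB_card (a b : {poly F}) : (a - b) ^+ q = a ^+ q - b ^+ q.
Proof. by rewrite exprD_card (exprNn_pchar _ pchar_poly_nat_card). Qed.

Lemma exprZ_card (a : F) (p : {poly F}) : (a *: p) ^+ q = a *: p ^+ q.
Proof. by rewrite -!mul_polyC exprMn -polyC_exp expf_card. Qed.

Lemma expr_card_sum (I : Type) (r : seq I) (Q : pred I) (G : I -> {poly F}) :
  (\sum_(i <- r | Q i) G i) ^+ q = \sum_(i <- r | Q i) G i ^+ q.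
Proof.
apply: (big_morph (fun p : {poly F} => p ^+ q) exprD_card).
by rewrite expr0n gtn_eqF // ltnW // finNzRing_gt1.
Qed.

Lemma subr_expr_card_inj (f g : {poly F}) :
  g ^+ q - g = f ^+ q - f -> g.[0] = f.[0] -> g = f.
Proof.
move=> eq_gf eq0; apply/eqP; rewrite -subr_eq0; apply/eqP.
have h_fixed : (g - f) ^+ q = g - f.
  apply/eqP; rewrite exprB_card -subr_eq0.
  have -> : g ^+ q - f ^+ q - (g - f) = (g ^+ q - g) - (f ^+ q - f) by ring.
  by rewrite eq_gf subrr.
have /size1_polyC -> := size_poly_le1_of_expr_id (finNzRing_gt1 F) h_fixed.
by rewrite -horner_coef0 hornerD hornerN eq0 subrr.
Qed.

End FiniteFieldFrobenius.

Section Construction.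
Context {F : finFieldType} (m : nat) (c : nat -> F).
Local Notation q := #|F|.

Definition asroot_chain (i : nat) : {poly F} :=
  \sum_(t < m - i) 'X^(q ^ (i + t) + q ^ (m + t)).

Definition asroot : {poly F} := \sum_(i < m) c (2 * m - i) *: asroot_chain i.

Lemma asroot_chain_frobenius i : (i <= m)%N ->
  asroot_chain i ^+ q - asroot_chain i
  = 'X^(q ^ m + q ^ (2 * m - i)) - 'X^(q ^ i + q ^ m).
Proof.
move=> le_im; rewrite /asroot_chain expr_card_sum -sumrB.
have XnS t : 'X^(q ^ (i + t) + q ^ (m + t)) ^+ q
             = 'X^(q ^ (i + t.+1) + q ^ (m + t.+1)) :> {poly F}.
  by rewrite -exprM mulnDl -!expnSr !addnS.
under eq_bigr do rewrite XnS.
rewrite -(big_mkord xpredT (fun t => 'X^(q ^ (i + t.+1) + q ^ (m + t.+1))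
                                    - 'X^(q ^ (i + t) + q ^ (m + t)))).
rewrite telescope_sumr // !addn0 subnKC //.
by have -> : (m + (m - i) = 2 * m - i)%N by lia.
Qed.

Lemma asroot_frobenius :
  (forall i, (i <= m)%N -> c i = - c (2 * m - i)) -> c m = 0 ->
  asroot ^+ q - asroot = 'X^(q ^ m) * linPhi m c.
Proof.
move=> c_anti c_mid.
rewrite /asroot expr_card_sum -sumrB /linPhi mulr_sumr.
under eq_bigr do rewrite exprZ_card -scalerBr.
under [RHS]eq_bigr do rewrite -scalerAr -exprD.
rewrite (sumr_fold_middle m (fun i => c i *: 'X^(q ^ m + q ^ i))); last first.
  by rewrite c_mid scale0r.
apply: eq_bigr => i _; have le_im := ltnW (ltn_ord i).
rewrite asroot_chain_frobenius // (c_anti i) //.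
by rewrite scalerBr scaleNr addrC [(q ^ i + q ^ m)%N]addnC.
Qed.

Lemma asroot_chain_monic_size i : (i < m)%N ->
  asroot_chain i \is monic
  /\ size (asroot_chain i) = (q ^ m.-1 + q ^ (2 * m - i.+1)).+1.
Proof.
move=> lt_im; rewrite /asroot_chain -(subnSK lt_im).
have [] := @sum_Xn_increasing F (fun t => q ^ (i + t) + q ^ (m + t))%N (m - i.+1).
  move=> a b lt_ab; have q_gt1 := finNzRing_gt1 F.
  have : (q ^ (i + a) < q ^ (i + b))%N by rewrite ltn_exp2l // ltn_add2l.
  have : (q ^ (m + a) < q ^ (m + b))%N by rewrite ltn_exp2l // ltn_add2l.
  lia.
move=> -> ->; split=> //; congr (_ ^ _ + _ ^ _).+1; lia.
Qed.

Lemma asroot_monic_size : (0 < m)%N -> c (2 * m) = 1 ->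
  asroot \is monic /\ size asroot = (q ^ m.-1 * (q ^ m + 1)).+1.
Proof.
move=> m_gt0 c_top.
rewrite /asroot -(big_mkord xpredT (fun i => c (2 * m - i) *: asroot_chain i)).
rewrite (big_ltn m_gt0) subn0 c_top scale1r.
have [chain0_monic size_chain0] := asroot_chain_monic_size 0 m_gt0.
have lt_rest : (size (\sum_(1 <= i < m) c (2 * m - i) *: asroot_chain i)%R
                < size (asroot_chain 0))%N.
  rewrite size_chain0 ltnS; apply: leq_trans (size_sum _ _ _) _.
  apply/bigmax_leqP_seq => i; rewrite mem_index_iota => /andP[i_gt0 lt_im] _.
  apply: leq_trans (size_scale_leq _ _) _.
  have [_ ->] := asroot_chain_monic_size i lt_im.
  by rewrite ltn_add2l ltn_exp2l ?finNzRing_gt1 //; lia.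
split; first exact: monicDl.
rewrite size_polyDl // size_chain0 mulnDr muln1 -expnD addnC.
by have -> : (m.-1 + m = 2 * m - 1)%N by lia.
Qed.

Lemma asroot_supported :
  supported_in (fun k => exists i j, k = (q ^ i + q ^ j)%N) asroot.
Proof.
apply: supported_in_sum => i _; apply: supported_in_scale.
by apply: supported_in_sum => t _; apply: supported_in_Xn; do 2!eexists.
Qed.

Lemma asroot0 : asroot.[0] = 0.
Proof.
rewrite horner_coef0 (supported_in_coef asroot_supported) // => -[i [j]].
have q_gt0 := ltnW (finNzRing_gt1 F).
by have := expn_gt0 q i; have := expn_gt0 q j; rewrite q_gt0; lia.
Qed.

End Construction.

Theorem lemma4p5 (F : finFieldType) (m : nat) (c : nat -> F)
  (hm : (2 <= m)%N)
  (htop : c (2 * m)%N = 1)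
  (hanti : forall i : nat, (i <= m)%N -> c i = - c (2 * m - i)%N)
  (hmid : c m = 0) :
  let q := #|F| in
  let Phi := linPhi m c in
  exists f : {poly F},
    [/\ f \is monic,
        size f = (q ^ m.-1 * (q ^ m + 1)).+1,
        f ^+ q - f = 'X^(q ^ m) * Phi,
        f.[0] = 0 &
        forall k : nat, f`_k != 0 -> exists i j : nat, k = (q ^ i + q ^ j)%N]
    /\ (forall g : {poly F},
          g \is monic -> size g = (q ^ m.-1 * (q ^ m + 1)).+1 ->
          g ^+ q - g = 'X^(q ^ m) * Phi -> g.[0] = 0 -> g = f).
Proof.
move=> q Phi.
have [f_monic f_size] := asroot_monic_size m c (ltnW hm) htop.
have f_eq := asroot_frobenius m c hanti hmid.
exists (asroot m c); split.
  by split; [exact: f_monic | exact: f_size | exact: f_eq | exact: asroot0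
            | exact: asroot_supported].
move=> g _ _ g_eq g0; apply: subr_expr_card_inj.
  by rewrite g_eq f_eq.
by rewrite g0 (asroot0 m c).
Qed.
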